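(* Let $\preceq$ be a preorder on a set $\mathcal{X}$ and let $k\ge1$ be an integer. Let $\mathcal{F}\subseteq\{0,\dots,k\}^{\mathcal{X}}$ be a class of functions with $\mathrm{fat}^o_2(\mathcal{F},\mathcal{X})=d$. Then for any $n>d$ and any ordered $\mathcal{X}$-valued tree $\mathbf{x}$ of depth $n$, $$\mathcal{N}_\infty(\mathcal{F},1/2,\mathbf{x})\le\sum_{i=0}^d\binom ni k^i.$$ Hence, for a class $\mathcal{G}\subseteq[-1,1]^{\mathcal{X}}$, for any $\beta>0$ and any ordered $\mathcal{X}$-valued tree $\mathbf{x}$ of depth $n$, $$\mathcal{N}_\infty(\mathcal{G},\beta,\mathbf{x})\le\Big(\frac{2en}{\beta}\Big)^{\mathrm{fat}^o_\beta(\mathcal{G},\mathcal{X})}.$$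
   Context: A preorder is a reflexive, transitive binary relation. An $\mathcal{X}$-valued tree of depth $n$ is a sequence of maps $\mathbf{x}_t:\{0,1\}^{t-1}\to\mathcal{X}$, $t=1,\dots,n$, with $\mathbf{x}_t(y)=\mathbf{x}_t(y_1,\dots,y_{t-1})$ for $y\in\{0,1\}^n$. It is ordered if for every $y\in\{0,1\}^n$, $\mathbf{x}_t(y)\preceq\mathbf{x}_{t+1}(y)$ for all $t=1,\dots,n-1$. For $\mathcal{X}'\subseteq\mathcal{X}$, a class $\mathcal{F}\subseteq\mathbb{R}^{\mathcal{X}}$ shatters at scale $\beta>0$ an ordered $\mathcal{X}'$-valued tree $\mathbf{x}$ of depth $d$ if there is an $\mathbb{R}$-valued witness tree $\mathbf{s}$ of depth $d$ such that for every $y\in\{0,1\}^d$ there exists $f\in\mathcal{F}$ with $(2y_t-1)(f(\mathbf{x}_t(y))-\mathbf{s}_t(y))\ge\beta/2$ for all $t$; $\mathrm{fat}^o_\beta(\mathcal{F},\mathcal{X}')$ is the largest depth of an ordered $\mathcal{X}'$-valued tree shattered at scale $\beta$. A set $V$ of $\mathbb{R}$-valued trees of depth $n$ is a sequential $\gamma$-cover (in $\ell_\infty$) of $\mathcal{F}$ on $\mathbf{x}$ if for every $f\in\mathcal{F}$ and every $y\in\{0,1\}^n$ there is $\mathbf{v}\in V$ with $\max_t|\mathbf{v}_t(y)-f(\mathbf{x}_t(y))|\le\gamma$; $\mathcal{N}_\infty(\mathcal{F},\gamma,\mathbf{x})$ is the size of the smallest such cover. *)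

From HB Require Import structures.
From mathcomp Require Import all_boot all_order all_algebra.
From mathcomp Require Import all_classical all_reals all_analysis.
Set Implicit Arguments. Unset Strict Implicit. Unset Printing Implicit Defensive.
Import Order.TTheory GRing.Theory Num.Theory.
Local Open Scope ring_scope.

(* A T-valued tree: a node is labelled by the prefix of the path leading to it.
   For a path y : n.-tuple bool and t < n (0-indexed), the paper's
   x_{t+1}(y) = x_{t+1}(y_1,...,y_t) is  x (take t y). *)
Definition tree (T : Type) := seq bool -> T.

Definition ordered_tree (X : Type) (le : X -> X -> Prop) (n : nat) (x : tree X) :=
  forall (y : n.-tuple bool) (t : nat), (t.+1 < n)%N ->
    le (x (take t y)) (x (take t.+1 y)).

Definition tree_valued_in (X : Type) (X' : set X) (n : nat) (x : tree X) :=
  forall (y : n.-tuple bool) (t : nat), (t < n)%N -> X' (x (take t y)).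

Definition shatters_ordered (R : realType) (X : Type) (le : X -> X -> Prop)
    (F : set (X -> R)) (beta : R) (X' : set X) (d : nat) :=
  exists x : tree X, [/\ ordered_tree le d x, tree_valued_in X' d x &
    exists s : tree R, forall y : d.-tuple bool, exists f, F f /\
      forall t : 'I_d,
        beta / 2 <= (2 * (tnth y t)%:R - 1) * (f (x (take t y)) - s (take t y))].

Definition fat_o_eq (R : realType) (X : Type) (le : X -> X -> Prop)
    (F : set (X -> R)) (beta : R) (X' : set X) (d : nat) :=
  shatters_ordered le F beta X' d /\
  forall d', shatters_ordered le F beta X' d' -> (d' <= d)%N.

Definition seq_cover (R : realType) (X : Type) (F : set (X -> R)) (gamma : R)
    (n : nat) (x : tree X) (m : nat) (V : 'I_m -> tree R) :=
  forall f, F f -> forall y : n.-tuple bool, exists i : 'I_m,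
    forall t : 'I_n, `|V i (take t y) - f (x (take t y))| <= gamma.

Definition Ninf_le (R : realType) (X : Type) (F : set (X -> R)) (gamma : R)
    (n : nat) (x : tree X) (B : R) :=
  exists (m : nat) (V : 'I_m -> tree R), seq_cover F gamma n x V /\ m%:R <= B.

(* Induction on the depth of the tree, with a the label of its root.  If the
   fibers {f in F | f a = i} and {f in F | f a = j} with j >= i + 2 both
   shattered ordered trees of depth d - 1 whose labels lie above a, grafting
   them under a (with witness i + 1 at the root) would give an ordered tree of
   depth d shattered by F.  So at most two consecutive values j0, j0 + 1 have
   such "heavy" fibers; these two fibers are covered together (the root value
   j0 + 1/2 is within 1/2 of both) and the k remaining fibers separately.  For
   the size N(n, d) of 1/2-covers of classes shattering no ordered tree of
   depth d this gives N(n + 1, d) <= N(n, d) + k N(n, d - 1), which is solved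
   by sum_(i < d) C(n, i) k^i.
   For G with values in [-1, 1], rounding (g + 1) / beta down to an integer
   turns G into a {0, ..., floor(2 / beta)}-valued class whose scale-2
   shattering gives scale-beta shattering of G and whose 1/2-covers give
   beta-covers of G; the bound then follows from C(n, i) <= n^i and
   d + 1 <= e^d. *)

From HB Require Import structures.
From mathcomp Require Import all_boot all_order all_algebra.
From mathcomp Require Import all_classical all_reals all_analysis.
From mathcomp Require Import ring lra zify.
Import Order.TTheory GRing.Theory Num.Theory.
Local Open Scope ring_scope.
Local Open Scope classical_set_scope.
Set Implicit Arguments. Unset Strict Implicit.

Lemma forall_tuple_cons n (P : n.+1.-tuple bool -> Prop) :
  (forall b (y : n.-tuple bool), P [tuple of b :: y]) -> forall y, P y.
Proof. by move=> H y; rewrite (tuple_eta y); apply: H. Qed.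

Section Trees.
Variable T : Type.

Definition subtree (x : tree T) (b : bool) : tree T := fun p => x (b :: p).

Definition graft (r : T) (x0 x1 : tree T) : tree T :=
  fun p => if p is b :: p' then (if b then x1 p' else x0 p') else r.

End Trees.

Section OrderedTrees.
Variables (X : Type) (le : X -> X -> Prop).
Hypotheses (le_xx : forall a, le a a)
  (le_xyz : forall a b c, le a b -> le b c -> le a c).

Lemma ordered_subtree n x b :
  ordered_tree le n.+1 x -> ordered_tree le n (subtree x b).
Proof. by move=> xo y t lt_tn; apply: (xo [tuple of b :: y] t.+1). Qed.

Lemma ordered_root_le n x (y : n.-tuple bool) t :
  ordered_tree le n x -> (t < n)%N -> le (x [::]) (x (take t y)).
Proof.
move=> xo; elim: t => [|t IH] lt_tn; first by rewrite take0.
exact: le_xyz (IH (ltnW lt_tn)) (xo y t lt_tn).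
Qed.

Lemma valued_subtree n (X' : set X) x b :
  ordered_tree le n.+1 x -> tree_valued_in X' n.+1 x ->
  tree_valued_in (X' `&` le (x [::])) n (subtree x b).
Proof.
move=> xo xX' y t lt_tn; split; first exact: (xX' [tuple of b :: y] t.+1).
exact: (ordered_root_le [tuple of b :: y] xo (lt_tn : (t.+1 < n.+1)%N)).
Qed.

End OrderedTrees.

Section Shattering.
Variables (R : realType) (X : Type) (le : X -> X -> Prop).
Implicit Types (F G : set (X -> R)) (A B : set X).

Lemma shatters_nonempty F beta A d :
  shatters_ordered le F beta A d -> exists f, F f.
Proof.
by case=> x [_ _ [s /(_ [tuple of nseq d false]) [f [Ff _]]]]; exists f.
Qed.

Lemma shatters0 F beta A (a : X) f : F f -> shatters_ordered le F beta A 0.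
Proof.
move=> Ff; exists (fun=> a); split => //.
by exists (fun=> 0) => y; exists f; split => // -[].
Qed.

Lemma shatters_sub F G beta A B d :
  F `<=` G -> A `<=` B ->
  shatters_ordered le F beta A d -> shatters_ordered le G beta B d.
Proof.
move=> FG AB [x [xo xA [s Fs]]]; exists x; split => //.
- by move=> y t lt_td; apply/AB/xA.
- by exists s => y; have [f [Ff fs]] := Fs y; exists f; split => //; apply: FG.
Qed.

Lemma shatters_graft F F0 F1 beta A a r d :
  A a ->
  (forall f, F0 f -> F f /\ f a <= r - beta / 2) ->
  (forall f, F1 f -> F f /\ r + beta / 2 <= f a) ->
  shatters_ordered le F0 beta (A `&` le a) d ->
  shatters_ordered le F1 beta (A `&` le a) d ->
  shatters_ordered le F beta A d.+1.
Proof.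
move=> Aa F0F F1F [x0 [x0o x0X [s0 F0s]]] [x1 [x1o x1X [s1 F1s]]].
exists (graft a x0 x1); split.
- apply: forall_tuple_cons => -[] y [|t] lt_td /=.
  + by case: (x1X y 0%N lt_td).
  + exact: x1o.
  + by case: (x0X y 0%N lt_td).
  + exact: x0o.
- by apply: forall_tuple_cons => -[] y [|t] lt_td //=; [case: (x1X y t) | case: (x0X y t)].
exists (graft r s0 s1); apply: forall_tuple_cons => -[] y.
- have [f [/F1F [Ff fa] fs]] := F1s y; exists f; split => // -[[|t] lt_td].
    by rewrite (tnth_nth false) /=; lra.
  by have := fs (Ordinal (lt_td : (t < d)%N)); rewrite !(tnth_nth false).
- have [f [/F0F [Ff fa] fs]] := F0s y; exists f; split => // -[[|t] lt_td].
    by rewrite (tnth_nth false) /=; lra.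
  by have := fs (Ordinal (lt_td : (t < d)%N)); rewrite !(tnth_nth false).
Qed.

Lemma fat_not_shatters F beta A d :
  fat_o_eq le F beta A d -> ~ shatters_ordered le F beta A d.+1.
Proof. by case=> _ fat_max /fat_max; rewrite ltnn. Qed.

End Shattering.

Section Covers.
Variables (R : realType) (X : Type).
Implicit Types (F G : set (X -> R)).

Definition cover_le (gamma : R) F n (x : tree X) (M : nat) :=
  exists s : seq (tree R), (size s <= M)%N /\
    forall f, F f -> forall y : n.-tuple bool, exists2 i, (i < size s)%N &
      forall t : 'I_n, `|nth (fun=> 0) s i (take t y) - f (x (take t y))| <= gamma.

Lemma Ninf_le_cover gamma F n x M (B : R) :
  cover_le gamma F n x M -> M%:R <= B -> Ninf_le F gamma n x B.
Proof.
move=> [s [sM Fs]] MB; exists (size s), (nth (fun=> 0) s); split.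
  2: by apply: le_trans MB; rewrite ler_nat.
by move=> f Ff y; have [i lt_is fi] := Fs f Ff y; exists (Ordinal lt_is).
Qed.

Lemma cover_le_empty gamma F n x M : (forall f, ~ F f) -> cover_le gamma F n x M.
Proof. by move=> F0; exists [::]; split => // f /F0. Qed.

Lemma cover_le_depth0 gamma F x M : (0 < M)%N -> cover_le gamma F 0 x M.
Proof. by exists [:: fun=> 0]; split => // f _ y; exists 0%N => // -[]. Qed.

Lemma cover_le_setU gamma F G n x M1 M2 :
  cover_le gamma F n x M1 -> cover_le gamma G n x M2 ->
  cover_le gamma (F `|` G) n x (M1 + M2).
Proof.
move=> [s1 [s1M Fs1]] [s2 [s2M Gs2]]; exists (s1 ++ s2).
split=> [|f [Ff|Gf] y]; first by rewrite size_cat leq_add.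
- have [i lt_is fi] := Fs1 f Ff y; exists i; first by rewrite size_cat ltn_addr.
  by move=> t; rewrite nth_cat lt_is.
- have [i lt_is fi] := Gs2 f Gf y; exists (size s1 + i)%N.
    by rewrite size_cat ltn_add2l.
  by move=> t; rewrite nth_cat ltnNge leq_addr /= addKn.
Qed.

Lemma cover_le_sub gamma F G n x M :
  F `<=` G -> cover_le gamma G n x M -> cover_le gamma F n x M.
Proof. by move=> FG [s [sM Gs]]; exists s; split=> // f /FG; apply: Gs. Qed.

Lemma cover_le_bigcup gamma (C : nat -> set (X -> R)) (M : nat -> nat) G n x K :
  G `<=` \bigcup_(i in `I_K) C i ->
  (forall i, (i < K)%N -> cover_le gamma (C i) n x (M i)) ->
  cover_le gamma G n x (\sum_(i < K) M i).
Proof.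
elim: K G => [|K IH] G GC CM.
  by apply: cover_le_empty => f /GC [].
rewrite big_ord_recr /=.
apply: cover_le_sub (cover_le_setU (IH (\bigcup_(i in `I_K) C i) _ _) (CM K _)) => //.
- move=> f /GC [i /= le_iK Cf]; have [lt_iK|ge_iK] := ltnP i K.
    by left; exists i.
  by right; have -> : K = i by lia.
- by move=> i lt_iK; apply: CM; apply: ltnW.
Qed.

Lemma cover_le_graft gamma F n x (r : R) M :
  (forall f, F f -> `|r - f (x [::])| <= gamma) ->
  (forall b, cover_le gamma F n (subtree x b) M) ->
  cover_le gamma F n.+1 x M.
Proof.
move=> Fr xF; have [[s0 [s0M Fs0]] [s1 [s1M Fs1]]] := (xF false, xF true).
pose v i := graft r (nth (fun=> 0) s0 i) (nth (fun=> 0) s1 i).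
exists (mkseq v M); split=> [|f Ff]; first by rewrite size_mkseq.
apply: forall_tuple_cons => -[] y;
  [have [i lt_is fi] := Fs1 f Ff y; have lt_iM := leq_trans lt_is s1M
  |have [i lt_is fi] := Fs0 f Ff y; have lt_iM := leq_trans lt_is s0M];
  exists i; rewrite ?size_mkseq // => -[[|t] lt_tn]; rewrite nth_mkseq //=;
  solve [exact: Fr | exact: (fi (Ordinal (lt_tn : (t < n)%N)))].
Qed.

End Covers.

Definition nat_valued (R : realType) (X : Type) (k : nat) (F : set (X -> R)) :=
  forall f, F f -> forall a, exists j : nat, (j <= k)%N /\ f a = j%:R.

(* Indexed by the first depth that is not shattered: for fat = d the bound is
   [sauer_sum k d.+1 n]. *)
Definition sauer_sum (k d n : nat) := (\sum_(i < d) 'C(n, i) * k ^ i)%N.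

Lemma sauer_sum_gt0 k d n : (0 < sauer_sum k d.+1 n)%N.
Proof. by rewrite /sauer_sum big_ord_recl bin0 expn0. Qed.

Lemma sauer_sumS k d n :
  sauer_sum k d.+1 n.+1 = (sauer_sum k d.+1 n + k * sauer_sum k d n)%N.
Proof.
rewrite /sauer_sum !big_ord_recl !bin0 -addnA; congr (_ + _)%N.
rewrite big_distrr -big_split /=; apply: eq_bigr => i _.
rewrite /bump leq0n add1n binS expnS; nia.
Qed.

Lemma sum_if_eq (j0 a b k : nat) : (j0 <= k)%N ->
  (\sum_(j < k.+1) (if j == j0 :> nat then a else b))%N = (a + k * b)%N.
Proof.
move=> le_j0k; rewrite (bigD1 (Ordinal (le_j0k : (j0 < k.+1)%N))) //= eqxx.
congr (_ + _)%N; rewrite (eq_bigr (fun=> b)) => [|j ne_j]; last first.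
  by rewrite ifN //; apply: contra ne_j => /eqP eq_j; apply/eqP/val_inj.
by rewrite sum_nat_const cardC1 card_ord mulnC.
Qed.

Lemma ffact_le_expn n i : (n ^_ i <= n ^ i)%N.
Proof. by elim: i => // i IH; rewrite ffactnSr expnSr leq_mul // leq_subr. Qed.

Lemma bin_le_expn n i : ('C(n, i) <= n ^ i)%N.
Proof.
by apply: leq_trans (ffact_le_expn n i); rewrite -bin_ffact leq_pmulr ?fact_gt0.
Qed.

Lemma sauer_sum_le k d n : (0 < n * k)%N -> (sauer_sum k d.+1 n <= d.+1 * (n * k) ^ d)%N.
Proof.
move=> nk_gt0; apply: (@leq_trans (\sum_(i < d.+1) (n * k) ^ d)%N).
  apply: leq_sum => i _; apply: (@leq_trans (n ^ i * k ^ i)%N).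
    by rewrite leq_mul ?bin_le_expn.
  by rewrite -expnMn leq_pexp2l // -ltnS.
by rewrite sum_nat_const card_ord.
Qed.

Lemma sauer_sum_le_expR (R : realType) (beta : R) d n :
  (0 < n)%N -> 0 < beta <= 2 ->
  (sauer_sum (Num.truncn (2 / beta)) d.+1 n)%:R <= (2 * expR 1 * n%:R / beta) ^+ d.
Proof.
move=> n_gt0 /andP[beta_gt0 beta_le2]; set K := Num.truncn (2 / beta).
have K_gt0 : (0 < K)%N by rewrite truncn_gt0 ler_pdivlMr // mul1r.
have K_le : K%:R <= 2 / beta by rewrite truncn_le divr_ge0 // ltW.
apply: (@le_trans _ _ (d.+1 * (n * K) ^ d)%N%:R).
  by rewrite ler_nat sauer_sum_le // muln_gt0 n_gt0.
rewrite natrM natrX natrM.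
have -> : 2 * expR 1 * n%:R / beta = expR 1 * (n%:R * (2 / beta)) by ring.
rewrite [leRHS]exprMn; apply: ler_pM => //.
- by rewrite -expRM_natl mulr1 -natr1 addrC expR_ge1Dx.
- apply: lerXn2r; rewrite ?nnegrE ?mulr_ge0 // ?ler_wpM2l //.
  by rewrite invr_ge0 ltW.
Qed.

Definition merge_succ (j0 v : nat) : nat := if v == j0.+1 then j0 else v.

Lemma merge_succ_le j0 v : (merge_succ j0 v <= v)%N.
Proof. by rewrite /merge_succ; case: eqP => // ->. Qed.

Lemma merge_succ_eq j0 v j :
  merge_succ j0 v = j -> j != j0 -> v = j /\ j != j0.+1.
Proof.
rewrite /merge_succ; case: eqP => [_ <-|ne_v <-]; first by rewrite eqxx.
by move=> _; split => //; apply/eqP.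
Qed.

Definition merge_center (R : realType) (j0 j : nat) : R :=
  if j == j0 then j%:R + 1 / 2 else j%:R.

Lemma merge_centerP (R : realType) j0 v :
  `|merge_center R j0 (merge_succ j0 v) - v%:R| <= 1 / 2.
Proof.
rewrite /merge_center /merge_succ; have [->|_] := eqVneq v j0.+1.
  by rewrite !eqxx -(addn1 j0) natrD ler_norml; apply/andP; split; lra.
by have [->|_] := eqVneq v j0; rewrite ler_norml; apply/andP; split; lra.
Qed.

Section Quantization.
Variables (R : realType) (X : Type) (le : X -> X -> Prop) (beta : R).
Hypothesis beta_gt0 : 0 < beta.
Implicit Types (G : set (X -> R)) (A : set X).

Definition quant (r : R) : nat := Num.truncn ((r + 1) / beta).

Definition dequant (v : R) : R := beta * (v + 1 / 2) - 1.

Definition quant_class G : set (X -> R) := [set (fun a => (quant (g a))%:R) | g in G].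

Lemma quant_bounds r : -1 <= r ->
  beta * (quant r)%:R - 1 <= r < beta * ((quant r)%:R + 1) - 1.
Proof.
move=> ge_r; have r1E : r + 1 = beta * ((r + 1) / beta) by rewrite mulrC divfK ?gt_eqF.
have u_ge0 : 0 <= (r + 1) / beta by apply: divr_ge0; [lra | exact: ltW].
rewrite /quant; set u := (r + 1) / beta in u_ge0 r1E *; clearbody u.
have /andP[lo hi] := truncn_itv u_ge0; rewrite -natr1 in hi.
set m := (Num.truncn u)%:R in lo hi *.
have : beta * m <= beta * u by rewrite ler_pM2l.
have : beta * u < beta * (m + 1) by rewrite ltr_pM2l.
by rewrite -r1E; move=> *; apply/andP; split; lra.
Qed.

Lemma quant_le r : r <= 1 -> (quant r <= Num.truncn (2 / beta))%N.
Proof. by move=> le_r; apply: le_truncn; rewrite ler_pM2r ?invr_gt0 //; lra. Qed.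

Lemma dequant_close r v : -1 <= r ->
  `|v - (quant r)%:R| <= 1 / 2 -> `|dequant v - r| <= beta.
Proof.
move=> /quant_bounds /andP[lo hi]; rewrite /dequant !ler_norml => /andP[vlo vhi].
by apply/andP; split; nra.
Qed.

Lemma dequant_sep r s (b : bool) : -1 <= r ->
  2 / 2 <= (2 * b%:R - 1) * ((quant r)%:R - s) ->
  beta / 2 <= (2 * b%:R - 1) * (r - dequant s).
Proof.
move=> /quant_bounds /andP[lo hi]; rewrite /dequant.
by case: b => /=; rewrite ?mulr1n ?mulr0n => sep; nra.
Qed.

Lemma quant_class_nat_valued G :
  (forall g, G g -> forall a, -1 <= g a <= 1) ->
  nat_valued (Num.truncn (2 / beta)) (quant_class G).
Proof.
move=> Gb _ [g Gg <-] a; exists (quant (g a)); split => //.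
by apply: quant_le; case/andP: (Gb g Gg a).
Qed.

Lemma shatters_quant_class G A d :
  (forall g, G g -> forall a, -1 <= g a) ->
  shatters_ordered le (quant_class G) 2 A d -> shatters_ordered le G beta A d.
Proof.
move=> Gge [x [xo xA [s Hs]]]; exists x; split => //.
exists (dequant \o s) => y; have [_ [[g Gg <-] gs]] := Hs y.
by exists g; split => // t; apply: dequant_sep; [apply: Gge | apply: gs].
Qed.

Lemma cover_le_quant_class G n x M :
  (forall g, G g -> forall a, -1 <= g a) ->
  cover_le (1 / 2) (quant_class G) n x M -> cover_le beta G n x M.
Proof.
move=> Gge [s [sM Hs]]; exists [seq dequant \o v | v <- s]; rewrite size_map.
split=> // g Gg y; have [i lt_is gi] := Hs _ (ex_intro2 _ _ g Gg erefl) y.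
exists i => // t; rewrite (nth_map (fun=> 0)) //=.
by apply: dequant_close; [apply: Gge | apply: gi].
Qed.

Lemma shatters_scale_le2 G A d :
  (forall g, G g -> forall a, -1 <= g a <= 1) ->
  shatters_ordered le G beta A d.+1 -> beta <= 2.
Proof.
move=> Gb [x [_ _ [s Hs]]].
have [g1 [Gg1 /(_ ord0)]] := Hs [tuple of nseq d.+1 true].
have [g0 [Gg0 /(_ ord0)]] := Hs [tuple of nseq d.+1 false].
rewrite !tnth_nseq /=; have /andP[? ?] := Gb g1 Gg1 (x [::]).
have /andP[? ?] := Gb g0 Gg0 (x [::]); lra.
Qed.

End Quantization.

Section SauerShelah.
Variables (R : realType) (X : Type) (le : X -> X -> Prop).
Hypotheses (le_xx : forall a, le a a)
  (le_xyz : forall a b c, le a b -> le b c -> le a c).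
Implicit Types (F G : set (X -> R)) (A : set X).

Definition fiber F a (j : nat) : set (X -> R) := F `&` [set f | f a = j%:R].

Lemma cover_le_not_shatters0 gamma F beta A n x M :
  ~ shatters_ordered le F beta A 0 -> cover_le gamma F n x M.
Proof. by move=> Fnsh; apply: cover_le_empty => f /(shatters0 le beta A (x [::])). Qed.

Lemma shatters_fiber_gap F A a i j d :
  A a -> (i.+2 <= j)%N ->
  shatters_ordered le (fiber F a i) 2 (A `&` le a) d ->
  shatters_ordered le (fiber F a j) 2 (A `&` le a) d ->
  shatters_ordered le F 2 A d.+1.
Proof.
move=> Aa le_ij; apply: (shatters_graft (r := i%:R + 1)) => // f [Ff fa].
  by split=> //; rewrite fa; lra.
have : i%:R + 2 <= j%:R :> R by rewrite -natrD addn2 ler_nat.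
by move: fa => /= <-; split=> //; lra.
Qed.

Lemma nat_pred_two_consecutive (P : nat -> Prop) k :
  (forall i j, P i -> P j -> (j <= i.+1)%N) -> (forall j, P j -> (j <= k)%N) ->
  exists2 j0, (j0 <= k)%N & forall j, P j -> j = j0 \/ j = j0.+1.
Proof.
move=> Pclose Pk; have [[j Pj]|noP] := pselect (exists j, P j); last first.
  by exists 0%N => // j Pj; case: noP; exists j.
have [j0 /asboolP Pj0 j0_min] := ex_minnP (ex_intro (fun j => `[< P j >]) j (asboolT Pj)).
exists j0 => [|i Pi]; first exact: Pk.
by have := j0_min i (asboolT Pi); have := Pclose _ _ Pj0 Pi; lia.
Qed.

Lemma fibers_shatter_consecutive k F A a d :
  nat_valued k F -> A a -> ~ shatters_ordered le F 2 A d.+1 ->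
  exists2 j0, (j0 <= k)%N & forall j,
    shatters_ordered le (fiber F a j) 2 (A `&` le a) d -> j = j0 \/ j = j0.+1.
Proof.
move=> Fk Aa Fnsh.
apply: nat_pred_two_consecutive => [i j Pi Pj|j /shatters_nonempty [f [Ff fa]]].
  by rewrite leqNgt; apply/negP => lt_ij; apply/Fnsh/(shatters_fiber_gap Aa lt_ij Pi Pj).
by have [v [le_vk]] := Fk f Ff a; rewrite fa => /eqP; rewrite eqr_nat => /eqP ->.
Qed.

Lemma cover_le_sauer k n d F A x :
  nat_valued k F -> ordered_tree le n x -> tree_valued_in A n x ->
  ~ shatters_ordered le F 2 A d -> cover_le (1 / 2) F n x (sauer_sum k d n).
Proof.
elim: n d F A x => [|n IH] [|d] F A x Fk xo xA Fnsh;
  try exact: cover_le_not_shatters0 Fnsh.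
  by apply: cover_le_depth0; apply: sauer_sum_gt0.
set a := x [::]; have Aa : A a := xA [tuple of nseq n.+1 false] 0%N isT.
have [j0 le_j0k heavy] := fibers_shatter_consecutive Fk Aa Fnsh.
(* The two possibly heavy fibers j0 and j0.+1 form the single class C j0. *)
pose C j := F `&` [set f | exists v : nat, f a = v%:R /\ merge_succ j0 v = j].
rewrite sauer_sumS -(sum_if_eq _ _ le_j0k).
apply: (cover_le_bigcup (C := C)
  (M := fun j => if j == j0 then sauer_sum k d.+1 n else sauer_sum k d n)) => [f Ff|j le_jk].
  have [v [le_vk fa]] := Fk f Ff a; exists (merge_succ j0 v); last by split=> //; exists v.
  by rewrite /= ltnS (leq_trans (merge_succ_le j0 v)).
apply: (cover_le_graft (r := merge_center R j0 j)) => [f [_ [v [-> <-]]]|b].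
  exact: merge_centerP.
have IHb D G : G `<=` F -> ~ shatters_ordered le G 2 (A `&` le a) D ->
    cover_le (1 / 2) G n (subtree x b) (sauer_sum k D n).
  move=> GF; apply: IH => [g /GF /Fk||] //; [exact: ordered_subtree | exact: valued_subtree].
have CF i : C i `<=` F by move=> f [].
case: eqVneq => [->|ne_jj0]; apply: (IHb _ _ (CF _)) => Csh.
  by apply: Fnsh; apply: shatters_sub Csh.
have [_ [_ [_ [_ /merge_succ_eq /(_ ne_jj0) [_ ne_jj1]]]]] := shatters_nonempty Csh.
have C_fiber : C j `<=` fiber F a j.
  by move=> f [Ff [v [fa /merge_succ_eq /(_ ne_jj0) [vj _]]]]; split; rewrite // -vj.
by case: (heavy j (shatters_sub C_fiber _ Csh)) => // /eqP; rewrite (negbTE ne_jj0, negbTE ne_jj1).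
Qed.

Lemma Ninf_le_nat_valued k F d n x :
  nat_valued k F -> fat_o_eq le F 2 setT d -> ordered_tree le n x ->
  Ninf_le F (1 / 2) n x (sauer_sum k d.+1 n)%:R.
Proof.
move=> Fk fat xo; apply: Ninf_le_cover (lexx _).
by apply: (cover_le_sauer Fk xo) (fat_not_shatters fat).
Qed.

Lemma Ninf_le_fat G beta d n x :
  (forall g, G g -> forall a, -1 <= g a <= 1) -> 0 < beta ->
  fat_o_eq le G beta setT d -> (0 < n)%N -> ordered_tree le n x ->
  Ninf_le G beta n x ((2 * expR 1 * n%:R / beta) ^+ d).
Proof.
move=> Gb beta_gt0 fat n_gt0 xo.
have Gge g : G g -> forall a, -1 <= g a by move=> Gg a; case/andP: (Gb g Gg a).
have QGnsh : ~ shatters_ordered le (quant_class beta G) 2 setT d.+1.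
  by move/(shatters_quant_class beta_gt0 Gge); apply: fat_not_shatters.
have QGcov := cover_le_sauer (quant_class_nat_valued beta_gt0 Gb) xo (fun _ _ _ => I) QGnsh.
apply: Ninf_le_cover (cover_le_quant_class beta_gt0 Gge QGcov) _.
case: d fat {QGnsh QGcov} => [|d] fat.
  by rewrite /sauer_sum big_ord1 bin0 expn0.
apply: sauer_sum_le_expR => //; rewrite beta_gt0.
exact: shatters_scale_le2 Gb fat.1.
Qed.

End SauerShelah.

Unset Implicit Arguments.

Theorem theorem4 (R : realType) (X : Type) (le : X -> X -> Prop) :
  (forall a, le a a) ->
  (forall a b c, le a b -> le b c -> le a c) ->
  (forall (k : nat) (F : set (X -> R)) (d n : nat) (x : tree X),
      (1 <= k)%N ->
      (forall f, F f -> forall a, exists j : nat, (j <= k)%N /\ f a = j%:R) ->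
      fat_o_eq le F 2 setT d ->
      (d < n)%N ->
      ordered_tree le n x ->
      Ninf_le F (1 / 2) n x (\sum_(i < d.+1) 'C(n, i) * k ^ i)%N%:R) /\
  (forall (G : set (X -> R)) (beta : R) (d n : nat) (x : tree X),
      (forall g, G g -> forall a, -1 <= g a <= 1) ->
      0 < beta ->
      fat_o_eq le G beta setT d ->
      (0 < n)%N ->
      ordered_tree le n x ->
      Ninf_le G beta n x ((2 * expR 1 * n%:R / beta) ^+ d)).
Proof.
move=> le_xx le_xyz; split.
- by move=> k F d n x _ Fk fat _; apply: (Ninf_le_nat_valued le_xx le_xyz Fk fat).
- by move=> G beta d n x Gb beta_gt0 fat; apply: (Ninf_le_fat le_xx le_xyz Gb beta_gt0 fat).
Qed.
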